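(* Let $m\ge 2$ be an integer, and let $P_n\in\mathbb{R}^{m}$ and $P_n^k\in\mathbb{R}^{m}$ be arbitrary vectors (the latter a fixed linearization point), with components $P_{n,j}$ and $P^k_{n,j}$. For $i\in\{1,\dots,m\}$ define the softmax component $$R_{n,i}(P_n)=\frac{\exp(P_{n,i})}{\sum_{j=1}^{m}\exp(P_{n,j})},$$ and the log-sum-exp function $\mathrm{LSE}(P_n)=\ln\Bigl(\sum_{j=1}^{m}\exp(P_{n,j})\Bigr)$. Let $\exp(P_n^k)$ denote the vector with components $\exp(P^k_{n,j})$, and define $$\underline{R}_{n,i}(P_n)=1-\sum_{j\neq i}^{m}\exp(P_{n,j})\,\exp\Bigl\{-\mathrm{LSE}(P_n^k)-\Bigl[\frac{\exp(P_n^k)}{\sum_{j=1}^{m}\exp(P^k_{n,j})}\Bigr]^{\top}(P_n-P_n^k)\Bigr\}.$$ Then for all $P_n\in\mathbb{R}^{m}$ we have $R_{n,i}(P_n)\ge \underline{R}_{n,i}(P_n)$, and moreover $\underline{R}_{n,i}$ is a concave function of $P_n$.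
   Context: Here $P_n$ plays the role of the $n$th row of a matrix $P\in\mathbb{R}^{m\times m}$ to which the softmax function is applied row-wise, and $P_n^k$ is the corresponding row of a fixed matrix $P^k$ (a linearization point). The sum $\sum_{j\neq i}^{m}$ means the sum over $j\in\{1,\dots,m\}\setminus\{i\}$. *)

From HB Require Import structures.
From mathcomp Require Import all_boot all_order all_algebra.
From mathcomp Require Import all_classical all_reals all_analysis.
Set Implicit Arguments. Unset Strict Implicit. Unset Printing Implicit Defensive.
Import Order.TTheory GRing.Theory Num.Theory.
Local Open Scope ring_scope.

Section Softmax.
Variables (R : realType) (m : nat).

Definition softmax (P : 'rV[R]_m) (i : 'I_m) : R :=
  expR (P 0 i) / \sum_(j < m) expR (P 0 j).

Definition LSE (P : 'rV[R]_m) : R := ln (\sum_(j < m) expR (P 0 j)).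

Definition softmax_lb (Pk P : 'rV[R]_m) (i : 'I_m) : R :=
  1 - \sum_(j < m | j != i)
        expR (P 0 j) *
        expR (- LSE Pk - \sum_(l < m) softmax Pk l * (P 0 l - Pk 0 l)).

End Softmax.

Definition concave_fun (R : realType) (m : nat) (f : 'rV[R]_m -> R) : Prop :=
  forall (x y : 'rV[R]_m) (t : R), 0 <= t -> t <= 1 ->
    t * f x + (1 - t) * f y <= f (t *: x + (1 - t) *: y).

(* The log-sum-exp function is convex with gradient softmax, so it dominates its
   tangent plane [LSE_tangent Pk] at [Pk] (Jensen for exp with the softmax weights
   of [Pk]).  Since softmax P i = 1 - sum_(j != i) exp (P_j - LSE P) and the lower
   bound is the same expression with LSE replaced by its tangent plane, the
   inequality holds termwise.  The exponents P_j - LSE_tangent Pk P are affine in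
   P, so every term is convex and the lower bound is concave. *)

From HB Require Import structures.
From mathcomp Require Import all_boot all_order all_algebra.
From mathcomp Require Import all_classical all_reals all_analysis.
From mathcomp Require Import ring lra.
Import Order.TTheory GRing.Theory Num.Theory.
Local Open Scope ring_scope.

Section ExpConvexity.
Variable R : realType.

Lemma expR_convex (a b t : R) : 0 <= t -> t <= 1 ->
  expR (t * a + (1 - t) * b) <= t * expR a + (1 - t) * expR b.
Proof. by move=> t0 t1; exact: (convex_expR (Itv01 t0 t1) a b). Qed.

Lemma expR_wsum_le (I : finType) (w x : I -> R) :
  (forall l, 0 <= w l) -> \sum_l w l = 1 ->
  expR (\sum_l w l * x l) <= \sum_l w l * expR (x l).
Proof.
move=> w_ge0 w_sum1; set c := \sum_l w l * x l.
have tangent l : expR c * (1 + (x l - c)) <= expR (x l).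
  by rewrite -[x l in leRHS](subrK c) expRD mulrC ler_wpM2r ?expR_ge0 ?expR_ge1Dx.
have -> : expR c = \sum_l w l * (expR c * (1 + (x l - c))).
  have expand l : w l * (expR c * (1 + (x l - c))) =
      expR c * w l + expR c * (w l * x l) - expR c * c * w l by ring.
  by rewrite (eq_bigr _ (fun l _ => expand l)) !big_split /= sumrN -!mulr_sumr w_sum1 -/c; ring.
by apply: ler_sum => l _; rewrite ler_wpM2l.
Qed.

End ExpConvexity.

Section Softmax.
Context {R : realType} {m : nat}.
Implicit Types (P Pk : 'rV[R]_m) (i : 'I_m).

(* An index [i] that does not occur in a statement only witnesses [0 < m]. *)

Definition LSE_tangent Pk P : R :=
  LSE Pk + \sum_(l < m) softmax Pk l * (P 0 l - Pk 0 l).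

Lemma sum_expR_gt0 P i : 0 < \sum_(j < m) expR (P 0 j).
Proof. by rewrite (bigD1 i) //= ltr_pwDl ?expR_gt0 ?sumr_ge0. Qed.

Lemma expR_LSE P i : expR (LSE P) = \sum_(j < m) expR (P 0 j).
Proof. by rewrite lnK // posrE (sum_expR_gt0 P i). Qed.

Lemma softmax_ge0 P l : 0 <= softmax P l.
Proof. by rewrite divr_ge0 ?expR_ge0 ?sumr_ge0. Qed.

Lemma sum_softmax P i : \sum_(l < m) softmax P l = 1.
Proof. by rewrite -mulr_suml divff // lt0r_neq0 // (sum_expR_gt0 P i). Qed.

Lemma sum_softmax_expR_sub Pk P i :
  \sum_(l < m) softmax Pk l * expR (P 0 l - Pk 0 l) = expR (LSE P - LSE Pk).
Proof.
rewrite expRD expRN !(expR_LSE _ i) mulr_suml; apply: eq_bigr => l _.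
by rewrite /softmax mulrAC -expRD (addrC (Pk 0 l)) subrK.
Qed.

Lemma LSE_tangent_le Pk P i : LSE_tangent Pk P <= LSE P.
Proof.
rewrite /LSE_tangent addrC -lerBrDr -ler_expR -(sum_softmax_expR_sub _ _ i).
by apply: expR_wsum_le; [exact: softmax_ge0 | exact: sum_softmax].
Qed.

Lemma softmaxE P i :
  softmax P i = 1 - \sum_(j < m | j != i) expR (P 0 j - LSE P).
Proof.
under eq_bigr do rewrite expRD.
rewrite -mulr_suml expRN (expR_LSE _ i) /softmax (bigD1 i) //=.
have := sum_expR_gt0 P i; rewrite (bigD1 i) //= => /lt0r_neq0.
by move: (\sum_(j < m | j != i) _) => S S0; field.
Qed.

Lemma softmax_lbE Pk P i :
  softmax_lb Pk P i = 1 - \sum_(j < m | j != i) expR (P 0 j - LSE_tangent Pk P).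
Proof.
rewrite /softmax_lb /LSE_tangent; congr (1 - _); apply: eq_bigr => j _.
by rewrite opprD expRD.
Qed.

Definition affine_fun (f : 'rV[R]_m -> R) : Prop :=
  forall x y t, f (t *: x + (1 - t) *: y) = t * f x + (1 - t) * f y.

Lemma affine_LSE_tangent Pk : affine_fun (LSE_tangent Pk).
Proof.
move=> x y t; rewrite /LSE_tangent.
have -> : \sum_(l < m) softmax Pk l * ((t *: x + (1 - t) *: y) 0 l - Pk 0 l) =
    t * \sum_(l < m) softmax Pk l * (x 0 l - Pk 0 l) +
    (1 - t) * \sum_(l < m) softmax Pk l * (y 0 l - Pk 0 l).
  by rewrite !mulr_sumr -big_split /=; apply: eq_bigr => l _; rewrite !mxE; ring.
ring.
Qed.

Lemma affine_coordB_LSE_tangent Pk j :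
  affine_fun (fun P => P 0 j - LSE_tangent Pk P).
Proof. by move=> x y t; rewrite affine_LSE_tangent !mxE; ring. Qed.

Lemma concave_fun_1_sub_sum_expR {I : finType} (p : pred I)
    (f : I -> 'rV[R]_m -> R) :
  (forall j, affine_fun (f j)) ->
  concave_fun (fun P => 1 - \sum_(j | p j) expR (f j P)).
Proof.
move=> f_affine x y t t0 t1 /=.
suff : \sum_(j | p j) expR (f j (t *: x + (1 - t) *: y)) <=
    t * \sum_(j | p j) expR (f j x) + (1 - t) * \sum_(j | p j) expR (f j y) by lra.
rewrite !mulr_sumr -big_split /=; apply: ler_sum => j _.
by rewrite f_affine; exact: expR_convex.
Qed.

End Softmax.

Theorem lemma1 (R : realType) (m : nat) (hm : (2 <= m)%N)
  (Pk : 'rV[R]_m) (i : 'I_m) :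
  (forall P : 'rV[R]_m, softmax_lb Pk P i <= softmax P i) /\
  concave_fun (fun P : 'rV[R]_m => softmax_lb Pk P i).
Proof.
(* [hm] is not needed: the index [i] already makes every sum of exponentials positive. *)
split=> [P | x y t t0 t1].
- rewrite softmax_lbE softmaxE lerB // ler_sum // => j _.
  by rewrite ler_expR lerB // (LSE_tangent_le Pk P i).
- rewrite !softmax_lbE.
  exact: (concave_fun_1_sub_sum_expR (fun j => j != i) _
            (affine_coordB_LSE_tangent Pk) x y t t0 t1).
Qed.
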